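(* Let $P=(U,R)$ be a partial order with $U=\{u_1,\dots,u_n\}$, let $V=\{v_1,\dots,v_n\}$, and let $E_0=\{u_iv_i: 1\le i\le n\}$. The following are equivalent: (a) $P=P_1\cap P_2$ for some linear order $P_1$ and some interval order $P_2$ on $U$; (b) there exist two partial orders $P_1,P_2$ on $U$ such that $\widehat{C}(P)=\widehat{NC}(P_1)\cup\widehat{C}(P_2)$ and both $\widehat{NC}(P_1)$ and $\widehat{C}(P_2)$ are chain graphs; (c) $\widehat{C}(P)$ is linear-interval coverable, i.e. $\widehat{C}(P)=G_1\cup G_2$ for two chain graphs $G_1=(U,V,E_1)$ and $G_2=(U,V,E_2)$ with $E_0\subseteq E_2\setminus E_1$.
   Context: For a partial order $Q$ on $U=\{u_1,\dots,u_n\}$ and a disjoint copy $V=\{v_1,\dots,v_n\}$: the domination bipartite graph $C(Q)=(U,V,E)$ has $u_iv_j\in E$ iff $u_i<_Q u_j$; the bipartite graph $NC(Q)=(U,V,E')$ has $u_iv_j\in E'$ iff $u_i\le_Q u_j$ (i.e. $u_i<_Q u_j$ or $i=j$). For a bipartite graph $B=(U,V,F)$, its bipartite complement is $\widehat{B}=(U,V,\widehat F)$ where, for $u\in U,v\in V$, $uv\in\widehat F$ iff $uv\notin F$. For graphs on the same vertex set, $G_1\cup G_2$ denotes the graph with the union of the edge sets. A bipartite graph $(U,V,F)$ is a chain graph if for any two vertices in the same color class one neighborhood contains the other. A linear order is a partial order in which any two distinct elements are comparable; an interval order is a partial order whose elements can be assigned real intervals $I_x$ so that $x<y$ iff $I_x$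 lies entirely to the left of $I_y$; $P_1\cap P_2$ is the order whose relation is the intersection of the relations. *)

From Stdlib Require Import Reals.
From mathcomp Require Import all_boot.
Set Implicit Arguments. Unset Strict Implicit. Unset Printing Implicit Defensive.

(* Ground set U = {u_1..u_n} is 'I_n; V = {v_1..v_n} is a disjoint copy, also
   indexed by 'I_n. A partial order on U is given by its reflexive relation le. *)
Definition partial_order n (le : rel 'I_n) : Prop :=
  [/\ forall x, le x x,
      forall x y, le x y -> le y x -> x = y &
      forall x y z, le x y -> le y z -> le x z].

Definition ltP n (le : rel 'I_n) : rel 'I_n := fun x y => le x y && (x != y).

Definition linear_order n (le : rel 'I_n) : Prop :=
  partial_order le /\ forall x y, x != y -> le x y || le y x.

Definition interval_order n (le : rel 'I_n) : Prop :=
  partial_order le /\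
  exists (l r : 'I_n -> R),
    (forall x, Rle (l x) (r x)) /\
    (forall x y, ltP le x y <-> Rlt (r x) (l y)).

(* bipartite graphs (U,V,F): F i j means u_i v_j is an edge *)
Definition Cgraph n (le : rel 'I_n) : rel 'I_n := fun i j => ltP le i j.
Definition NCgraph n (le : rel 'I_n) : rel 'I_n := fun i j => le i j.
Definition bcompl n (F : rel 'I_n) : rel 'I_n := fun i j => ~~ F i j.
Definition gunion n (F1 F2 : rel 'I_n) : rel 'I_n := fun i j => F1 i j || F2 i j.

Definition chain_graph n (F : rel 'I_n) : Prop :=
  (forall i i', (forall j, F i j -> F i' j) \/ (forall j, F i' j -> F i j)) /\
  (forall j j', (forall i, F i j -> F i j') \/ (forall i, F i j' -> F i j)).

Definition order_inter n (le le1 le2 : rel 'I_n) : Prop :=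
  forall x y, le x y = le1 x y && le2 x y.

Definition same_graph n (F G : rel 'I_n) : Prop := forall i j, F i j = G i j.

(* A linear order le1 is exactly a partial order whose non-domination graph
   has nested neighbourhoods in complement, and an interval order le2 is
   exactly one whose strict domination graph has nested neighbourhoods in
   complement (order the intervals by their endpoints, or conversely read the
   endpoints off the sizes of the nested neighbourhoods).  Since the
   complement of C(le) is the union of the two complemented graphs precisely
   when le = le1 /\ le2, this gives (a) <-> (b), and (b) -> (c) is immediate.
   For (c) -> (a), take for le2 the reflexive closure of the complement of
   E2, a strict order thanks to the Ferrers property of that complement and
   the diagonal of E2, and for le1 any linear extension of the relation
   "x <_P y, or x <= a and b <= y with u_b v_a in E1": it is acyclic because
   E1 is a Ferrers relation avoiding every comparable pair of le. *)
From Pilot Require Import Defs.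
From Stdlib Require Import Reals Lra.
From mathcomp Require Import all_boot.
From mathcomp Require Import zify.
Set Implicit Arguments. Unset Strict Implicit. Unset Printing Implicit Defensive.

Lemma chain_graph_ferrers n (F : rel 'I_n) : chain_graph F ->
  forall x y z w, F x y -> F z w -> F x w || F z y.
Proof.
case=> nestU _ x y z w Fxy Fzw.
by case: (nestU x z) => sub; [rewrite (sub _ Fxy) orbT | rewrite (sub _ Fzw)].
Qed.

Lemma chain_graph_compl n (F : rel 'I_n) : chain_graph F -> chain_graph (bcompl F).
Proof.
case=> nestU nestV; split.
- by move=> i i'; case: (nestU i i') => sub; [right|left] => j; apply: contra; apply: sub.
- by move=> j j'; case: (nestV j j') => sub; [right|left] => i; apply: contra; apply: sub.
Qed.

Lemma chain_graph_eq n (F G : rel 'I_n) : F =2 G -> chain_graph F -> chain_graph G.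
Proof.
move=> eFG [nestU nestV]; split.
- by move=> i i'; case: (nestU i i') => sub; [left|right] => j; rewrite -!eFG; apply: sub.
- by move=> j j'; case: (nestV j j') => sub; [left|right] => i; rewrite -!eFG; apply: sub.
Qed.

Lemma ltP_trans n (le : rel 'I_n) : partial_order le -> transitive (Defs.ltP le).
Proof.
case=> _ anti trans y x z /andP [xy nxy] /andP [yz nyz]; rewrite /Defs.ltP (trans _ _ _ xy yz).
by apply/eqP => exz; subst z; rewrite (anti _ _ xy yz) eqxx in nxy.
Qed.

Lemma ltP_irr n (le : rel 'I_n) : irreflexive (Defs.ltP le).
Proof. by move=> x; rewrite /Defs.ltP eqxx andbF. Qed.

Lemma partial_order_refl_closure n (S : rel 'I_n) :
  irreflexive S -> transitive S -> partial_order (fun x y => (x == y) || S x y).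
Proof.
move=> irrS trS; split.
- by move=> x; rewrite eqxx.
- move=> x y /orP [/eqP //|Sxy] /orP [/eqP -> //|Syx].
  by move: (trS _ _ _ Sxy Syx); rewrite irrS.
- move=> x y z /orP [/eqP -> //|Sxy] /orP [/eqP <-|Syz]; first by rewrite Sxy orbT.
  by rewrite (trS _ _ _ Sxy Syz) orbT.
Qed.

Lemma ltP_refl_closure n (S : rel 'I_n) :
  irreflexive S -> Defs.ltP (fun x y => (x == y) || S x y) =2 S.
Proof.
move=> irrS x y; rewrite /Defs.ltP.
by case: (eqVneq x y) => [<-|_]; rewrite ?irrS ?andbT.
Qed.

Section LinearOrders.
Variables (n : nat) (le1 : rel 'I_n).

Lemma linear_order_chain_graph :
  linear_order le1 -> chain_graph (bcompl (NCgraph le1)).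
Proof.
case=> [[refl _ trans] lin]; rewrite /bcompl /NCgraph.
have total x y : le1 x y || le1 y x.
  by case: (eqVneq x y) => [->|nxy]; [rewrite refl | apply: lin].
split.
- move=> i i'; case/orP: (total i i') => le_ii'; [left|right] => j;
    by apply: contra; apply: trans.
- move=> j j'; case/orP: (total j j') => le_jj'; [right|left] => i;
    by apply: contra => le_i; apply: trans le_i _.
Qed.

Lemma chain_graph_linear_order :
  partial_order le1 -> chain_graph (bcompl (NCgraph le1)) -> linear_order le1.
Proof.
move=> po [nestU _]; split => // x y nxy; case: po => refl _ _.
apply/negPn/negP; rewrite negb_or => /andP [nle_xy nle_yx].
by case: (nestU x y) => sub; [move: (sub y nle_xy) | move: (sub x nle_yx)];
  rewrite /bcompl /NCgraph refl.
Qed.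

End LinearOrders.

Section IntervalOrders.
Variables (n : nat) (le2 : rel 'I_n).

Lemma interval_order_chain_graph :
  interval_order le2 -> chain_graph (bcompl (Cgraph le2)).
Proof.
case=> _ [l [r [_ ltE]]]; rewrite /bcompl /Cgraph.
have nltE i j : ~~ Defs.ltP le2 i j <-> Rle (l j) (r i).
  split => [nlt|le_lr]; first by apply: Rnot_lt_le => /ltE lt; rewrite lt in nlt.
  by apply/negP => /ltE; lra.
split.
- move=> i i'; case: (Rle_lt_dec (r i) (r i')) => ri; [left|right] => j /nltE lj;
    apply/nltE; lra.
- move=> j j'; case: (Rle_lt_dec (l j') (l j)) => lj; [left|right] => i /nltE lj';
    apply/nltE; lra.
Qed.

(* The interval of x runs from the number of elements below x to the number of
   elements below some element that x does not precede; the down-sets are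
   nested, so the latter is the size of the largest such down-set. *)
Lemma chain_graph_interval_order :
  partial_order le2 -> chain_graph (bcompl (Cgraph le2)) -> interval_order le2.
Proof.
move=> po [_ nestV]; split => //.
have nest y z : (forall w, Defs.ltP le2 w y -> Defs.ltP le2 w z) \/
                (forall w, Defs.ltP le2 w z -> Defs.ltP le2 w y).
  by case: (nestV y z) => sub; [right|left] => w; apply: contraLR; apply: sub.
pose down x := [set z | Defs.ltP le2 z x].
pose reach x := [set w | [exists z, ~~ Defs.ltP le2 x z && Defs.ltP le2 w z]].
have down_reach x : down x \subset reach x.
  by apply/subsetP => w; rewrite !inE => wx; apply/existsP; exists x; rewrite ltP_irr wx.
exists (fun x => INR #|down x|), (fun x => INR #|reach x|); split.
  by move=> x; apply/le_INR/leP/subset_leq_card.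
move=> x y; split=> [xy | lt_xy].
- apply/lt_INR/ssrnat.ltP/proper_card/properP; split.
  + apply/subsetP => w; rewrite !inE => /existsP [z /andP [nxz wz]].
    case: (nest z y) => [sub|sub]; first exact: sub.
    by rewrite (sub _ xy) in nxz.
  + exists x; rewrite !inE //; apply/existsP => [[z /andP [nxz xz]]].
    by rewrite xz in nxz.
- apply/negPn/negP => nxy; apply: (Rlt_not_le _ _ lt_xy).
  apply/le_INR/leP/subset_leq_card/subsetP => w; rewrite !inE => wy.
  by apply/existsP; exists y; rewrite nxy wy.
Qed.

End IntervalOrders.

Definition lex_key n (k : 'I_n -> nat) : rel 'I_n :=
  fun x y => (k x < k y) || ((k x == k y) && (x <= y)).

Lemma lex_key_linear n (k : 'I_n -> nat) : linear_order (lex_key k).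
Proof.
rewrite /lex_key; split; first split.
- by move=> x; rewrite eqxx leqnn orbT.
- move=> x y /orP [?|/andP [/eqP ? xy]] /orP [?|/andP [/eqP ? yx]]; try lia.
  by apply: val_inj; apply/eqP; rewrite eqn_leq xy yx.
- move=> x y z /orP [?|/andP [/eqP kxy xy]] /orP [?|/andP [/eqP kyz yz]];
    apply/orP; try (left; lia).
  by right; rewrite kxy kyz eqxx (leq_trans xy yz).
- by move=> x y _; case: (ltngtP (k x) (k y)); rewrite ?orbT ?leq_total.
Qed.

Lemma lex_key_lt n (k : 'I_n -> nat) x y :
  k x < k y -> lex_key k x y && ~~ lex_key k y x.
Proof. by rewrite /lex_key => kxy; apply/andP; split; apply/orP; lia. Qed.

Lemma card_down_lt (T : finType) (S : rel T) :
  irreflexive S -> transitive S ->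
  forall x y, S x y -> #|[set z | S z x]| < #|[set z | S z y]|.
Proof.
move=> irrS trS x y Sxy; apply/proper_card/properP; split.
  by apply/subsetP => z; rewrite !inE => Szx; apply: trS Sxy.
by exists x; rewrite !inE ?irrS.
Qed.

Lemma order_inter_graphE n (le le1 le2 : rel 'I_n) :
  reflexive le -> reflexive le1 -> reflexive le2 ->
  order_inter le le1 le2 <->
  same_graph (bcompl (Cgraph le)) (gunion (bcompl (NCgraph le1)) (bcompl (Cgraph le2))).
Proof.
rewrite /order_inter /same_graph /bcompl /Cgraph /gunion /NCgraph /Defs.ltP.
move=> refl refl1 refl2; split => [inter x y | graph x y].
  by rewrite inter; case: (le1 x y); case: (le2 x y).
move: (graph x y); case: (eqVneq x y) => [<-|_]; first by rewrite refl refl1 refl2.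
by rewrite !andbT -negb_and => /negb_inj.
Qed.

Section CoverToOrders.
Variables (n : nat) (le E1 E2 : rel 'I_n).
Hypotheses (le_po : partial_order le)
  (cover : same_graph (bcompl (Cgraph le)) (gunion E1 E2))
  (E1_chain : chain_graph E1) (E2_chain : chain_graph E2)
  (diagE : forall i, E2 i i && ~~ E1 i i).

Lemma E1_incomparable b c : le b c -> ~~ E1 b c.
Proof.
move=> le_bc; case: (eqVneq b c) => [<-|nbc]; first by case/andP: (diagE b).
have := cover b c; rewrite /bcompl /Cgraph /gunion /Defs.ltP le_bc nbc.
by case: (E1 b c).
Qed.

Definition forced_lt : rel 'I_n := fun x y =>
  Defs.ltP le x y || [exists a, exists b, le x a && E1 b a && le b y].

Lemma forced_lt_irr : irreflexive forced_lt.
Proof.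
case: le_po => _ _ trans x; apply/negbTE; rewrite negb_or ltP_irr /=.
apply/existsPn => a; apply/existsPn => b; apply/negP => /andP [/andP [xa ba] bx].
by rewrite (negbTE (E1_incomparable (trans _ _ _ bx xa))) in ba.
Qed.

(* Two E1-steps a <- b, c <- d chained through y collapse to one (d, a) by the
   Ferrers property, since the other alternative E1 b c is excluded. *)
Lemma forced_lt_trans : transitive forced_lt.
Proof.
have lt_trans := ltP_trans le_po; case: le_po => _ _ trans.
have ltW x y : Defs.ltP le x y -> le x y by case/andP.
move=> y x z /orP [xy|/existsP [a /existsP [b /andP [/andP [xa ba] by_]]]]
             /orP [yz|/existsP [c /existsP [d /andP [/andP [yc dc] dz]]]]; apply/orP.
- by left; apply: lt_trans yz.
- right; apply/existsP; exists c; apply/existsP; exists d.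
  by rewrite (trans _ _ _ (ltW _ _ xy) yc) dc dz.
- right; apply/existsP; exists a; apply/existsP; exists b.
  by rewrite xa ba (trans _ _ _ by_ (ltW _ _ yz)).
- right; apply/existsP; exists a; apply/existsP; exists d; rewrite xa dz andbT /=.
  case/orP: (chain_graph_ferrers E1_chain ba dc) => // bc.
  by rewrite (negbTE (E1_incomparable (trans _ _ _ by_ yc))) in bc.
Qed.

Definition forced_key x := #|[set z | forced_lt z x]|.

Definition cover_le1 : rel 'I_n := lex_key forced_key.

Definition cover_le2 : rel 'I_n := fun x y => (x == y) || ~~ E2 x y.

Lemma forced_lt_le1 x y : forced_lt x y -> cover_le1 x y && ~~ cover_le1 y x.
Proof.
by move=> xy; apply/lex_key_lt/card_down_lt => //;
  [apply: forced_lt_irr | apply: forced_lt_trans].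
Qed.

Lemma notE2_irr : irreflexive (bcompl E2).
Proof. by move=> i; rewrite /bcompl; case/andP: (diagE i) => ->. Qed.

Lemma notE2_trans : transitive (bcompl E2).
Proof.
move=> y x z nxy nyz.
have := chain_graph_ferrers (chain_graph_compl E2_chain) nxy nyz.
by rewrite notE2_irr orbF.
Qed.

Lemma ltP_cover_le2 : Defs.ltP cover_le2 =2 bcompl E2.
Proof. exact/ltP_refl_closure/notE2_irr. Qed.

Lemma cover_le2_interval : interval_order cover_le2.
Proof.
have po2 : partial_order cover_le2.
  exact: (partial_order_refl_closure notE2_irr notE2_trans).
apply: chain_graph_interval_order => //.
by apply: chain_graph_eq E2_chain => i j; rewrite /bcompl /Cgraph ltP_cover_le2 negbK.
Qed.

Lemma cover_order_inter : order_inter le cover_le1 cover_le2.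
Proof.
case: le_po => refl _ _.
case: (lex_key_linear forced_key) => [[refl1 _ _] _].
apply/order_inter_graphE => // [x|i j]; first by rewrite /cover_le2 eqxx.
rewrite cover /gunion /bcompl /Cgraph ltP_cover_le2 negbK /NCgraph.
case e2: (E2 i j); rewrite ?orbT // !orbF.
case e1: (E1 i j).
- have ji : forced_lt j i.
    by apply/orP; right; apply/existsP; exists j; apply/existsP; exists i; rewrite e1 !refl.
  by case/andP: (forced_lt_le1 ji).
- have ij : forced_lt i j.
    by apply/orP; left; move: (cover i j); rewrite /gunion e1 e2 => /negbFE.
  by case/andP: (forced_lt_le1 ij) => ->.
Qed.

End CoverToOrders.

Theorem theorem5 (n : nat) (le : rel 'I_n) :
  partial_order le ->
  let A := exists le1 le2 : rel 'I_n,
      linear_order le1 /\ interval_order le2 /\ order_inter le le1 le2 in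
  let B := exists le1 le2 : rel 'I_n,
      partial_order le1 /\ partial_order le2 /\
      same_graph (bcompl (Cgraph le))
                 (gunion (bcompl (NCgraph le1)) (bcompl (Cgraph le2))) /\
      chain_graph (bcompl (NCgraph le1)) /\ chain_graph (bcompl (Cgraph le2)) in
  let C := exists E1 E2 : rel 'I_n,
      same_graph (bcompl (Cgraph le)) (gunion E1 E2) /\
      chain_graph E1 /\ chain_graph E2 /\
      (forall i, E2 i i && ~~ E1 i i) in
  (A <-> B) /\ (B <-> C).
Proof.
move=> po A B C; have [refl _ _] := po.
have AB : A -> B.
  case=> le1 [le2 [lin1 [int2 inter]]]; exists le1, le2.
  have [[[refl1 _ _] _] [[refl2 _ _] _]] := (lin1, int2).
  split; first by case: lin1.
  split; first by case: int2.
  split; first exact/order_inter_graphE.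
  by split; [apply: linear_order_chain_graph | apply: interval_order_chain_graph].
have BA : B -> A.
  case=> le1 [le2 [po1 [po2 [graph [chain1 chain2]]]]]; exists le1, le2.
  have [[refl1 _ _] [refl2 _ _]] := (po1, po2).
  split; first exact: chain_graph_linear_order.
  by split; [apply: chain_graph_interval_order | apply/order_inter_graphE].
have BC : B -> C.
  case=> le1 [le2 [[refl1 _ _] [_ [graph [chain1 chain2]]]]].
  exists (bcompl (NCgraph le1)), (bcompl (Cgraph le2)); do 3!split => //.
  by move=> i; rewrite /bcompl /NCgraph /Cgraph ltP_irr refl1.
have CA : C -> A.
  case=> E1 [E2 [cover [chain1 [chain2 diagE]]]].
  exists (cover_le1 le E1), (cover_le2 E2); split; first exact: lex_key_linear.
  by split; [apply: cover_le2_interval | apply: cover_order_inter].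
by split; split; [apply: AB | apply: BA | apply: BC | move=> /CA/AB].
Qed.
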